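(* In the setting described in the context, for every $j\in[\varepsilon^{-1}-\varepsilon^{-1/2}]$ it holds that $$\mathbb{E}\left[v(S_{j-1}\setminus S_j)\,\middle|\,\mathcal{F}_{j-1}\right]\ \ge\ v(x^j)\cdot\left(\varepsilon-\varepsilon^{3/2}\right)\cdot\frac{1}{1-(j-1)\varepsilon}.$$
   Context: A CMK instance is $\mathcal{I}=(I,w,v,m,k)$ with $I$ a finite item set, $w:I\to[0,1]$, $v:I\to\mathbb{R}_{\ge0}$, $m,k\in\mathbb{N}_{>0}$. A configuration is $C\subseteq I$ with $|C|\le k$ and $\sum_{i\in C}w(i)\le1$; $\mathcal{C}$ is the set of configurations and $\mathcal{C}(i)=\{C\in\mathcal{C}:i\in C\}$. A solution is a tuple of $m$ configurations, with value $v$ of their union; $\mathrm{OPT}(\mathcal{I})$ is the maximum value. A fractional solution is $x\in\mathbb{R}_{\ge0}^{\mathcal{C}}$, with $\mathrm{cover}_i(x)=\sum_{C\in\mathcal{C}(i)}x_C$, $\|x\|=\sum_Cx_C$; it is feasible if $\mathrm{cover}(x)\in[0,1]^I$; for $y\in\mathbb{R}^I$, $v(y)=\sum_iy_iv(i)$, and $v(x)=v(\mathrm{cover}(x))$. For $S\subseteq I$ and $\ell\in\mathbb{N}$, $\mathrm{LP}(S,\ell)$ is: maximize $v(x)$ over feasible fractional solutions $x$ with $x_C=0$ whenever $C\not\subseteq S$, and $\|x\|=\ell$. For $\|x\|\ne0$, a random configuration $R$ is distributed by $x$ ($R\sim x$) if $\Pr(R=C)=x_C/\|x\|$. Given $\varepsilon\in(0,0.1)$,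 $\mathcal{I}$ is $\varepsilon$-simple if $m>\exp(\exp(\varepsilon^{-30}))$ and $\varepsilon m\in\mathbb{N}$. Iterative randomized rounding: let $\varepsilon\in(0,0.1)$ with $\varepsilon^{-1/2}\in\mathbb{N}$ and $\mathcal{I}$ be $\varepsilon$-simple; let $q=\varepsilon m$ and $S_0=I$. For $j=1,\dots,\varepsilon^{-1}$: let $m_j=m(1-(j-1)\varepsilon)$; let $x^j$ be a $(1-\varepsilon)$-approximate solution of $\mathrm{LP}(S_{j-1},m_j)$ (a feasible solution of value at least $(1-\varepsilon)$ times its optimum), determined by the outcomes of the samples of previous iterations; sample independently $R^j_1,\dots,R^j_q\sim x^j$; set $S_j=S_{j-1}\setminus\bigcup_{b=1}^qR^j_b$. The output value is $V=v(I\setminus S_{\varepsilon^{-1}})$. Let $y^j=\mathrm{cover}(x^j)$. Let $\mathcal{F}_0$ be the trivial $\sigma$-algebra and $\mathcal{F}_j$ the $\sigma$-algebra generated by $\{R^{j'}_b: j'\le j,\ b\in[q]\}$. For $T\subseteq I$, $v(T)=\sum_{i\in T}v(i)$. *)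

From HB Require Import structures.
From mathcomp Require Import all_boot all_order all_algebra.
From mathcomp Require Import reals sequences exp.
Set Implicit Arguments. Unset Strict Implicit. Unset Printing Implicit Defensive.
Import Order.TTheory GRing.Theory Num.Theory.
Local Open Scope ring_scope.

Section CMK.
Context {R : realType} {I : finType}.

Definition is_config (w : I -> R) (k : nat) (C : {set I}) : bool :=
  (#|C| <= k)%N && (\sum_(i in C) w i <= 1).

Definition cover (x : {set I} -> R) (i : I) : R := \sum_(C : {set I} | i \in C) x C.
Definition fnorm (x : {set I} -> R) : R := \sum_(C : {set I}) x C.

Definition frac_feasible (w : I -> R) (k : nat) (x : {set I} -> R) : Prop :=
  (forall C : {set I}, 0 <= x C) /\ (forall C : {set I}, ~~ is_config w k C -> x C = 0) /\
  (forall i, 0 <= cover x i <= 1).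

Definition vvec (v : I -> R) (y : I -> R) : R := \sum_(i : I) y i * v i.
Definition vfrac (v : I -> R) (x : {set I} -> R) : R := vvec v (cover x).
Definition vset (v : I -> R) (T : {set I}) : R := \sum_(i in T) v i.

Definition LP_feasible (w : I -> R) (k : nat) (S : {set I}) (l : R) (x : {set I} -> R) : Prop :=
  frac_feasible w k x /\ (forall C : {set I}, ~~ (C \subset S) -> x C = 0) /\ fnorm x = l.

Definition approx_LP_sol (w : I -> R) (k : nat) (v : I -> R) (e : R)
    (S : {set I}) (l : R) (x : {set I} -> R) : Prop :=
  LP_feasible w k S l x /\
  (forall x', LP_feasible w k S l x' -> (1 - e) * vfrac v x' <= vfrac v x).

(* outcome of all samples: round t (0-indexed, t < N) , sample b < q *)
Definition outcome (N q : nat) := {ffun 'I_N -> {ffun 'I_q -> {set I}}}.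

Definition sample {N q : nat} (om : outcome N q) (t : nat) (b : 'I_q) : {set I} :=
  if (insub t : option 'I_N) is Some t' then om t' b else set0.

(* items covered by the samples of round t+1 (0-indexed t) *)
Definition removed {N q : nat} (om : outcome N q) (t : nat) : {set I} :=
  \bigcup_(b < q) sample om t b.

Fixpoint Sset {N q : nat} (om : outcome N q) (j : nat) : {set I} :=
  match j with
  | 0 => setT
  | j'.+1 => Sset om j' :\: removed om j'
  end.

Definition agree {N q : nat} (t : nat) (om om' : outcome N q) : bool :=
  [forall r : 'I_N, (r < t)%N ==> (om r == om' r)].

(* law of the process given the strategy X (X j om = x^j, j 1-indexed):
   Pr(om) = prod_j prod_b x^j_{R^j_b} / ||x^j|| *)
Definition prob {N q : nat} (X : nat -> outcome N q -> {set I} -> R)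
    (om : outcome N q) : R :=
  \prod_(t < N) \prod_(b < q) (X t.+1 om (om t b) / fnorm (X t.+1 om)).

(* conditional expectation of Z given F_t (sigma-algebra of rounds 1..t),
   evaluated at om (meaningful when om has positive probability) *)
Definition condexp {N q : nat} (X : nat -> outcome N q -> {set I} -> R)
    (t : nat) (Z : outcome N q -> R) (om : outcome N q) : R :=
  (\sum_(om' | agree t om om') prob X om' * Z om') /
  (\sum_(om' | agree t om om') prob X om').

End CMK.

(* Conditionally on the first j-1 rounds, the q samples of round j are
   independent draws from x^j/||x^j||: summing the product law over each later
   round, which has total mass one, leaves exactly this one-round average.
   Hence an item i of S_{j-1} is removed with probability 1 - (1 - p_i)^q, where
   p_i = y^j_i/m_j.  As (1 - p)^q <= 1 - qp + (qp)^2/2 and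
   u := q p_i = ε y^j_i/(1 - (j-1)ε) <= √ε (because 1 - (j-1)ε >= √ε when
   j <= ε^{-1} - ε^{-1/2}), this probability is at least u (1 - √ε); weighting
   by v and summing over S_{j-1}, which supports x^j, gives the bound. *)

From Pilot Require Import Defs.
From HB Require Import structures.
From mathcomp Require Import all_boot all_order all_algebra.
From mathcomp Require Import reals sequences exp.
From mathcomp Require Import ring lra.
Import Order.TTheory GRing.Theory Num.Theory.
Local Open Scope ring_scope.
Set Implicit Arguments. Unset Strict Implicit.

Section RoundUpdate.
Variables (I : finType) (N q : nat).
Local Notation round := {ffun 'I_q -> {set I}}.
Local Notation outcomes := (@outcome I N q).

Definition upd (om : outcomes) (t : 'I_N) (c : round) : outcomes :=
  [ffun r => if r == t then c else om r].

Lemma upd_same om t c : upd om t c t = c.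
Proof. by rewrite ffunE eqxx. Qed.

Lemma upd_other om t c r : r != t -> upd om t c r = om r.
Proof. by rewrite ffunE => /negbTE ->. Qed.

Lemma upd_upd om t c c' : upd (upd om t c) t c' = upd om t c'.
Proof. by apply/ffunP => r; rewrite !ffunE; case: eqP. Qed.

Lemma upd_id om t : upd om t (om t) = om.
Proof. by apply/ffunP => r; rewrite !ffunE; case: eqP => // ->. Qed.

Lemma big_upd (T : Type) (idx : T) (op : Monoid.com_law idx) (F : outcomes -> T)
    (t : 'I_N) (c0 : round) :
  \big[op/idx]_(om : outcomes) F om =
  \big[op/idx]_(om : outcomes | om t == c0) \big[op/idx]_(c : round) F (upd om t c).
Proof.
rewrite (partition_big (fun om : outcomes => om t) xpredT) //= [RHS]exchange_big /=.
apply: eq_bigr => c _.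
rewrite (reindex_onto (fun om => upd om t c) (fun om => upd om t c0)) /=; last first.
  by move=> om /eqP <-; rewrite upd_upd upd_id.
apply: eq_bigl => om; rewrite upd_same eqxx /= upd_upd.
apply/eqP/eqP => [<-|<-]; first by rewrite upd_same.
by rewrite upd_id.
Qed.

Lemma agreeP a (om om' : outcomes) :
  reflect (forall r : 'I_N, (r < a)%N -> om r = om' r) (agree a om om').
Proof.
apply: (iffP forallP) => [H r ra | H r]; first exact/eqP/(implyP (H r)).
by apply/implyP => /H ->.
Qed.

Lemma agree_refl t (om : outcomes) : agree t om om.
Proof. exact/agreeP. Qed.

Lemma agree_sym t (om om' : outcomes) : agree t om om' = agree t om' om.
Proof. by apply: eq_forallb => r; rewrite eq_sym. Qed.

Lemma agree_upd a (t : 'I_N) (om0 om : outcomes) c :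
  (a <= t)%N -> agree a om0 (upd om t c) = agree a om0 om.
Proof.
move=> le_at; apply: eq_forallb => r; case: ltnP => //= ra.
by rewrite upd_other // neq_ltn (leq_trans ra le_at).
Qed.

Lemma agree_upd_same (t : 'I_N) (om om' : outcomes) c :
  agree t om om' -> agree t.+1 (upd om t c) (upd om' t c).
Proof.
move/agreeP=> ag; apply/agreeP => r; rewrite ltnS leq_eqVlt => /orP [/eqP rt | rt].
  have -> : r = t by exact: val_inj.
  by rewrite !upd_same.
by rewrite !upd_other ?ag // neq_ltn rt.
Qed.

Lemma agree_le s t (om om' : outcomes) : (s <= t)%N -> agree t om om' -> agree s om om'.
Proof. by move=> st /agreeP ag; apply/agreeP => r rs; apply: ag; apply: leq_trans rs st. Qed.

Lemma Sset_agree t (om om' : outcomes) : agree t om om' -> Sset om t = Sset om' t.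
Proof.
elim: t => [//|t IH] ag /=; rewrite (IH (agree_le (leqnSn t) ag)).
congr (_ :\: _); apply: eq_bigr => b _; rewrite /sample.
by case: insubP => // t' _ Et; move/agreeP: ag => ag; rewrite ag // Et.
Qed.

Lemma removed_upd (t : 'I_N) (om : outcomes) c :
  removed (upd om t c) t = \bigcup_(b < q) c b.
Proof. by apply: eq_bigr => b _; rewrite /sample valK upd_same. Qed.

End RoundUpdate.

Section Coverage.
Variables (R : realType) (I : finType) (q : nat).

Lemma vsetI (v : I -> R) (S U : {set I}) :
  vset v (S :&: U) = \sum_(i in S) v i * (i \in U)%:R.
Proof.
rewrite /vset big_mkcond [RHS]big_mkcond /=; apply: eq_bigr => i _.
by rewrite inE; case: (i \in S); case: (i \in U); rewrite /= ?mulr1 ?mulr0.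
Qed.

Lemma mem_bigcup_natr (i : I) (c : 'I_q -> {set I}) :
  (i \in \bigcup_(b < q) c b)%:R = 1 - \prod_(b < q) ((i \notin c b)%:R : R).
Proof.
case: (boolP (i \in \bigcup_(b < q) c b)) => [/bigcupP [b _ ib]|ni] /=.
  by rewrite (bigD1 b) //= ib mul0r subr0.
rewrite big1 ?subrr // => b _; case: (boolP (i \in c b)) => // ib.
by case/negP: ni; apply/bigcupP; exists b.
Qed.

Lemma exp_covered_vset (p : {set I} -> R) (v : I -> R) (S : {set I}) :
    \sum_C p C = 1 ->
  \sum_(c : {ffun 'I_q -> {set I}})
      (\prod_(b < q) p (c b)) * vset v (S :&: \bigcup_(b < q) c b)
  = \sum_(i in S) v i * (1 - (1 - \sum_(C : {set I} | i \in C) p C) ^+ q).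
Proof.
move=> p1.
under eq_bigr => c _ do rewrite vsetI big_distrr /=.
rewrite exchange_big /=; apply: eq_bigr => i _.
under eq_bigr => c _ do rewrite mulrCA.
rewrite -big_distrr /=; congr (_ * _).
under eq_bigr => c _ do rewrite mem_bigcup_natr mulrBr mulr1 -big_split /=.
rewrite sumrB -(bigA_distr_bigA (fun _ : 'I_q => p)).
rewrite -(bigA_distr_bigA (fun (_ : 'I_q) (C : {set I}) => p C * (i \notin C)%:R)) /=.
rewrite !prodr_const card_ord p1 expr1n; congr (_ - _ ^+ _).
rewrite -[in RHS]p1 [in RHS](bigID (fun C : {set I} => i \in C)) /= addrAC subrr add0r.
rewrite [RHS]big_mkcond /=.
by apply: eq_bigr => C _; case: (i \in C); rewrite ?mulr0 ?mulr1.
Qed.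

End Coverage.

Lemma one_subX_le (R : realFieldType) (p : R) (n : nat) : 0 <= p <= 1 ->
  (1 - p) ^+ n <= 1 - n%:R * p + (n%:R * p) ^+ 2 / 2.
Proof.
case/andP=> p0 p1; elim: n => [|n IH].
  by rewrite expr0 mul0r expr0n /= mul0r !subr0 addr0.
have p1' : 0 <= 1 - p by rewrite subr_ge0.
rewrite exprS; apply: le_trans (ler_wpM2l p1' IH) _.
set x : R := n%:R.
have -> : n.+1%:R = x + 1 :> R by rewrite -natr1.
rewrite -subr_ge0.
have -> : 1 - (x + 1) * p + ((x + 1) * p) ^+ 2 / 2 - (1 - p) * (1 - x * p + (x * p) ^+ 2 / 2)
    = (p * p + p * p * x * x * p) / 2 by field.
by rewrite divr_ge0 // addr_ge0 // !mulr_ge0.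
Qed.

Lemma removal_prob_ge (R : rcfType) (e D mu y : R) (q : nat) :
    0 < e -> 0 < mu -> Num.sqrt e <= D -> 0 <= y <= 1 -> y <= mu * D -> e * mu = q%:R ->
  y * (e - e * Num.sqrt e) / D <= 1 - (1 - y / (mu * D)) ^+ q.
Proof.
move=> e0 mu0 sD /andP[y0 y1] yL emu; set s := Num.sqrt e.
have s0 : 0 < s by rewrite sqrtr_gt0.
have D0 : 0 < D := lt_le_trans s0 sD.
have es : e = s ^+ 2 by rewrite sqr_sqrtr // ltW.
have P01 : 0 <= y / (mu * D) <= 1.
  have muD0 : 0 < mu * D by rewrite mulr_gt0.
  by rewrite divr_ge0 ?(ltW muD0) //= ler_pdivrMr // mul1r.
set u := e * y / D.
have qP : q%:R * (y / (mu * D)) = u by rewrite -emu /u; field; rewrite !gt_eqF.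
have := one_subX_le q P01; rewrite qP => Bq.
have u0 : 0 <= u by rewrite divr_ge0 ?(ltW D0) // mulr_ge0 // ltW.
have us : u <= s.
  rewrite /u ler_pdivrMr // es expr2 -mulrA ler_wpM2l ?(ltW s0) //.
  by apply: le_trans _ sD; rewrite ler_piMr // ltW.
have -> : y * (e - e * s) / D = u * (1 - s) by rewrite /u; field; rewrite gt_eqF.
have : u ^+ 2 <= u * s by rewrite expr2 ler_wpM2l.
have := sqr_ge0 u; lra.
Qed.

Section Schedule.
Variables (R : rcfType) (e : R) (K : nat).
Hypotheses (e_gt0 : 0 < e) (sqrt_invK : Num.sqrt (e^-1) = K%:R).

Lemma sqrt_mulK : Num.sqrt e * K%:R = 1.
Proof. by rewrite -sqrt_invK -(sqrtrM _ (ltW e_gt0)) mulfV ?gt_eqF // sqrtr1. Qed.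

Lemma sqrK_mul : K%:R ^+ 2 * e = 1.
Proof. by rewrite -sqrt_invK sqr_sqrtr ?invr_ge0 ?(ltW e_gt0) // mulVf ?gt_eqF. Qed.

Lemma schedule_gt0 r : (r < K ^ 2)%N -> 0 < 1 - r%:R * e.
Proof.
move=> lt_r; have : r%:R + 1 <= K%:R ^+ 2 :> R by rewrite -natrX natr1 ler_nat.
move=> /(ler_wpM2r (ltW e_gt0)); rewrite sqrK_mul mulrDl mul1r subr_gt0 => h.
by apply: lt_le_trans h; rewrite ltrDl.
Qed.

Lemma schedule_ge_sqrt r : (r <= K ^ 2 - K)%N -> Num.sqrt e <= 1 - r%:R * e.
Proof.
move=> le_r; set s := Num.sqrt e.
have K_le : (K <= K ^ 2)%N by rewrite -{1}[K]muln1 expnS expn1 leq_mul2l; case: (K).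
have Ke : K%:R * e = s.
  by rewrite -[e](sqr_sqrtr (ltW e_gt0)) expr2 mulrA [K%:R * s]mulrC sqrt_mulK mul1r.
have : r%:R * e <= (K%:R ^+ 2 - K%:R) * e.
  by rewrite ler_wpM2r ?(ltW e_gt0) // -natrX -natrB // ler_nat.
rewrite mulrBl sqrK_mul Ke; lra.
Qed.

End Schedule.

(* [cover] alone would denote finset's union of a set of sets. *)
Section FractionalSolutions.
Variables (R : realType) (I : finType).

Lemma vfrac_supported (v : I -> R) (x : {set I} -> R) (S : {set I}) :
    (forall C : {set I}, ~~ (C \subset S) -> x C = 0) ->
  vfrac v x = \sum_(i in S) Defs.cover x i * v i.
Proof.
move=> xS; rewrite /vfrac /vvec (bigID (mem S)) /= [X in _ + X]big1 ?addr0 // => i iS.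
rewrite /Defs.cover big1 ?mul0r // => C iC; apply: xS.
by apply: contra iS => /subsetP; apply.
Qed.

Lemma cover_le_fnorm (x : {set I} -> R) i :
  (forall C, 0 <= x C) -> Defs.cover x i <= fnorm x.
Proof.
by move=> x0; rewrite /fnorm (bigID (fun C : {set I} => i \in C)) /= lerDl sumr_ge0.
Qed.

End FractionalSolutions.

Section ProcessLaw.
Variables (R : realType) (I : finType) (N q : nat).
Local Notation round := {ffun 'I_q -> {set I}}.
Local Notation outcomes := (@outcome I N q).

Variable X : nat -> outcomes -> {set I} -> R.
Hypothesis X_adapted : forall (r : nat) (om om' : outcomes),
  (r < N)%N -> agree r om om' -> X r.+1 om = X r.+1 om'.
Hypothesis X_ge0 : forall (r : nat) (om : outcomes) C, (r < N)%N -> 0 <= X r.+1 om C.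
Hypothesis fnorm_X_neq0 :
  forall (r : nat) (om : outcomes), (r < N)%N -> fnorm (X r.+1 om) != 0.

Definition draw_prob (r : 'I_N) (om : outcomes) (C : {set I}) :=
  X r.+1 om C / fnorm (X r.+1 om).

Lemma draw_prob_ge0 r om C : 0 <= draw_prob r om C.
Proof. by rewrite divr_ge0 ?X_ge0 // sumr_ge0 // => D _; apply: X_ge0. Qed.

Lemma sum_draw_prob r om : \sum_C draw_prob r om C = 1.
Proof. by rewrite -mulr_suml mulfV ?fnorm_X_neq0. Qed.

Lemma sum_prod_draw_prob r om : \sum_(c : round) \prod_(b < q) draw_prob r om (c b) = 1.
Proof.
rewrite -(bigA_distr_bigA (fun _ : 'I_q => draw_prob r om)) /=.
by rewrite big1 // => b _; apply: sum_draw_prob.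
Qed.

Lemma draw_prob_agree (r : 'I_N) om om' : agree r om om' -> draw_prob r om = draw_prob r om'.
Proof. by move=> ag; rewrite /draw_prob (X_adapted (ltn_ord r) ag). Qed.

Lemma draw_prob_upd (r t : 'I_N) om c : (r <= t)%N -> draw_prob r (upd om t c) = draw_prob r om.
Proof.
move=> rt; apply: draw_prob_agree; apply/agreeP => r' r'r.
by rewrite upd_other // neq_ltn (leq_trans r'r rt).
Qed.

Definition round_prob (r : 'I_N) (om : outcomes) := \prod_(b < q) draw_prob r om (om r b).
Definition prefix_prob (t : nat) (om : outcomes) := \prod_(r < N | (r < t)%N) round_prob r om.
Definition blank : round := [ffun => set0].
Definition blank_from (t : nat) (om : outcomes) : R :=
  \prod_(r < N | (t <= r)%N) (om r == blank)%:R.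

(* The law of the first [t] rounds, carried by the outcomes whose later rounds
   are blank: integrating against it averages over the first [t] rounds only. *)
Definition prefix_weight (t : nat) (om : outcomes) := prefix_prob t om * blank_from t om.

Lemma prob_prefix_weight om : prob X om = prefix_weight N om.
Proof.
rewrite /prefix_weight /blank_from big_pred0 ?mulr1; last by move=> r; rewrite leqNgt ltn_ord.
by apply: eq_bigl => r; rewrite ltn_ord.
Qed.

Lemma prefix_prob_upd (t : 'I_N) om c : prefix_prob t (upd om t c) = prefix_prob t om.
Proof.
apply: eq_bigr => r rt; rewrite /round_prob upd_other ?neq_ltn ?rt //.
by apply: eq_bigr => b _; rewrite draw_prob_upd // ltnW.
Qed.

Lemma prefix_probS (t : 'I_N) om : prefix_prob t.+1 om = prefix_prob t om * round_prob t om.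
Proof.
rewrite /prefix_prob (bigD1 t) //= mulrC; congr (_ * _); apply: eq_bigl => r.
by rewrite ltnS ltn_neqAle andbC.
Qed.

Lemma blank_fromS (t : 'I_N) om : blank_from t om = (om t == blank)%:R * blank_from t.+1 om.
Proof.
rewrite /blank_from (bigD1 t) //=; congr (_ * _); apply: eq_bigl => r.
by rewrite ltn_neqAle eq_sym andbC.
Qed.

Lemma blank_from_upd (t : 'I_N) om c : blank_from t.+1 (upd om t c) = blank_from t.+1 om.
Proof. by apply: eq_bigr => r rt; rewrite upd_other // neq_ltn rt orbT. Qed.

Lemma sum_prefix_weightS (t : 'I_N) (G : outcomes -> R) :
  \sum_om G om * prefix_weight t.+1 om =
  \sum_om prefix_weight t om *
    \sum_(c : round) (\prod_(b < q) draw_prob t om (c b)) * G (upd om t c).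
Proof.
rewrite (big_upd _ _ t blank) [RHS](bigID (fun om : outcomes => om t == blank)) /=.
rewrite [X in _ = _ + X]big1 ?addr0; last first.
  by move=> om /negbTE om_t; rewrite /prefix_weight blank_fromS om_t mul0r mulr0 mul0r.
apply: eq_bigr => om /eqP om_t.
rewrite /prefix_weight blank_fromS om_t eqxx mul1r big_distrr /=; apply: eq_bigr => c _.
rewrite prefix_probS prefix_prob_upd blank_from_upd /round_prob upd_same.
rewrite (eq_bigr (fun b => draw_prob t om (c b))) => [|b _]; last by rewrite draw_prob_upd.
by rewrite mulrC -!mulrA; congr (_ * _); rewrite mulrCA.
Qed.

Lemma sum_prefix_weight_marginal (a b : nat) (F : outcomes -> R) :
    (forall (t : 'I_N) om c, (a <= t)%N -> F (upd om t c) = F om) -> (a <= b <= N)%N ->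
  \sum_om F om * prefix_weight b om = \sum_om F om * prefix_weight a om.
Proof.
move=> F_inv /andP[le_ab]; rewrite -(subnKC le_ab).
elim: (b - a)%N => [|n IH] le_N; first by rewrite addn0.
have lt_N : (a + n < N)%N by rewrite -addnS.
rewrite -[RHS](IH (ltnW lt_N)) addnS.
have /= -> := sum_prefix_weightS (Ordinal lt_N) F; apply: eq_bigr => om _.
under eq_bigr => c _ do rewrite (F_inv (Ordinal lt_N) _ _ (leq_addr n a)).
by rewrite -big_distrl /= sum_prod_draw_prob mul1r mulrC.
Qed.

Definition agree_mass (a : nat) (om0 : outcomes) :=
  \sum_om prefix_weight a om * (agree a om0 om)%:R.

Definition next_round_exp (a : 'I_N) (om0 : outcomes) (Z : outcomes -> R) :=
  \sum_(c : round) (\prod_(b < q) draw_prob a om0 (c b)) * Z (upd om0 a c).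

Lemma sum_agree_prob (a : 'I_N) (Z : outcomes -> R) om0 :
    (forall om om', agree a.+1 om om' -> Z om = Z om') ->
  \sum_(om | agree a om0 om) prob X om * Z om = agree_mass a om0 * next_round_exp a om0 Z.
Proof.
move=> Z_past.
have F_inv (t : 'I_N) om c : (a.+1 <= t)%N ->
    (agree a om0 (upd om t c))%:R * Z (upd om t c) = (agree a om0 om)%:R * Z om :> R.
  move=> lt_at; rewrite agree_upd ?(ltnW lt_at) //; congr (_ * _); apply: Z_past.
  by rewrite agree_sym agree_upd // agree_refl.
rewrite big_mkcond /=.
rewrite (eq_bigr (fun om => (agree a om0 om)%:R * Z om * prefix_weight N om)); last first.
  by move=> om _; rewrite prob_prefix_weight; case: agree; rewrite ?mul1r ?mul0r // mulrC.
have le_aN : (a.+1 <= N <= N)%N by rewrite ltn_ord leqnn.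
rewrite (sum_prefix_weight_marginal F_inv le_aN).
rewrite sum_prefix_weightS /agree_mass big_distrl /=; apply: eq_bigr => om _.
rewrite -mulrA; congr (_ * _).
have [ag|/negbTE nag] := boolP (agree a om0 om); last first.
  by rewrite mul0r big1 // => c _; rewrite agree_upd // nag mul0r mulr0.
rewrite mul1r /next_round_exp; apply: eq_bigr => c _.
rewrite agree_upd // ag mul1r; rewrite agree_sym in ag.
by rewrite (draw_prob_agree ag) (Z_past _ _ (agree_upd_same c ag)).
Qed.

Lemma condexp_next_round (a : 'I_N) (Z : outcomes -> R) om0 :
    (forall om om', agree a.+1 om om' -> Z om = Z om') -> agree_mass a om0 != 0 ->
  condexp X a Z om0 = next_round_exp a om0 Z.
Proof.
move=> Z_past mass_neq0.
have exp1 : next_round_exp a om0 (fun _ => 1) = 1.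
  rewrite -[RHS](sum_prod_draw_prob a om0); apply: eq_bigr => c _; exact: mulr1.
rewrite /condexp sum_agree_prob //.
have <- : agree_mass a om0 * next_round_exp a om0 (fun _ => 1) =
    \sum_(om | agree a om0 om) prob X om.
  by rewrite -sum_agree_prob //; apply: eq_bigr => om _; rewrite mulr1.
by rewrite exp1 mulr1 mulrC mulKf.
Qed.

Lemma prefix_prob_ge0 t om : 0 <= prefix_prob t om.
Proof. by apply: prodr_ge0 => r _; apply: prodr_ge0 => b _; apply: draw_prob_ge0. Qed.

Lemma prefix_prob_agree t om om' : agree t om om' -> prefix_prob t om = prefix_prob t om'.
Proof.
move=> ag; apply: eq_bigr => r rt.
rewrite /round_prob (draw_prob_agree (agree_le (ltnW rt) ag)).
by move/agreeP: ag => ->.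
Qed.

Lemma prefix_prob_gt0 t om : 0 < prob X om -> 0 < prefix_prob t om.
Proof.
move=> prob_gt0; rewrite lt0r prefix_prob_ge0 andbT; apply: contraTneq prob_gt0 => prefix0.
rewrite /prob (bigID (fun r : 'I_N => (r < t)%N)) /=.
by rewrite [X in X * _](_ : _ = prefix_prob t om) // prefix0 mul0r ltxx.
Qed.

Lemma agree_mass_gt0 a om0 : 0 < prob X om0 -> 0 < agree_mass a om0.
Proof.
move=> prob_gt0.
pose om1 : outcomes := [ffun r : 'I_N => if (r < a)%N then om0 r else blank].
have ag : agree a om0 om1 by apply/agreeP => r ra; rewrite ffunE ra.
rewrite /agree_mass (bigD1 om1) //= ag mulr1 ltr_wpDr //.
  apply: sumr_ge0 => om _; rewrite !mulr_ge0 ?prefix_prob_ge0 //.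
  by apply: prodr_ge0.
have blank1 : blank_from a om1 = 1.
  by apply: big1 => r; rewrite leqNgt ffunE => /negbTE ->; rewrite eqxx.
by rewrite /prefix_weight blank1 mulr1 -(prefix_prob_agree ag) prefix_prob_gt0.
Qed.

Lemma condexp_removed_vset (a : 'I_N) om (v : I -> R) : 0 < prob X om ->
  condexp X a (fun om' => vset v (Sset om' a :\: Sset om' a.+1)) om =
  \sum_(i in Sset om a) v i * (1 - (1 - Defs.cover (X a.+1 om) i / fnorm (X a.+1 om)) ^+ q).
Proof.
move=> prob_gt0; rewrite condexp_next_round ?gt_eqF ?agree_mass_gt0 //; last first.
  by move=> om1 om2 ag; rewrite (Sset_agree ag) (Sset_agree (agree_le (leqnSn a) ag)).
under [RHS]eq_bigr => i _ do rewrite /Defs.cover mulr_suml.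
rewrite -exp_covered_vset ?sum_draw_prob //; apply: eq_bigr => c _; congr (_ * _).
rewrite /= removed_upd.
have -> : Sset (upd om a c) a = Sset om a.
  by apply: Sset_agree; rewrite agree_sym agree_upd // agree_refl.
by rewrite setDDr setDv set0U.
Qed.

End ProcessLaw.

Theorem lemma4p3 (R : realType) (I : finType) (w v : I -> R) (m k : nat)
  (hw : forall i, 0 <= w i <= 1) (hv : forall i, 0 <= v i)
  (hm : (0 < m)%N) (hk : (0 < k)%N)
  (e : R) (he : 0 < e < 1 / 10)
  (K : nat) (hK : Num.sqrt (e^-1) = K%:R)
  (hsimple : expR (expR (e ^- 30)) < m%:R)
  (q : nat) (hq : e * m%:R = q%:R)
  (X : nat -> outcome (K ^ 2) q -> {set I} -> R)
  (hXadapt : forall (j : nat) (om om' : outcome (K ^ 2) q),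
      (1 <= j <= K ^ 2)%N -> agree j.-1 om om' -> X j om = X j om')
  (hXapprox : forall (j : nat) (om : outcome (K ^ 2) q),
      (1 <= j <= K ^ 2)%N ->
      approx_LP_sol w k v e (Sset om j.-1) (m%:R * (1 - (j.-1)%:R * e)) (X j om))
  (j : nat) (hj : (1 <= j <= K ^ 2 - K)%N)
  (om : outcome (K ^ 2) q) (hom : 0 < prob X om) :
  vfrac v (X j om) * (e - e * Num.sqrt e) * (1 - (j.-1)%:R * e)^-1
    <= condexp X j.-1 (fun om' => vset v (Sset om' j.-1 :\: Sset om' j)) om.
Proof.
(* Neither the weights nor the size of [m] matter here. *)
case: j hj => [//|a] /andP[_ le_a] /=.
have [e_gt0 _] := andP he.
have lt_a : (a < K ^ 2)%N := leq_trans le_a (leq_subr _ _).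
have feasible r o : (r < K ^ 2)%N ->
    LP_feasible w k (Sset o r) (m%:R * (1 - r%:R * e)) (X r.+1 o).
  by move=> lt_r; case: (hXapprox r.+1 o lt_r).
have X_ge0 r o C : (r < K ^ 2)%N -> 0 <= X r.+1 o C.
  by move=> /(feasible r o) [[x_ge0 _] _].
have fnorm_neq0 r o : (r < K ^ 2)%N -> fnorm (X r.+1 o) != 0.
  move=> lt_r; have [_ [_ ->]] := feasible r o lt_r.
  by rewrite mulf_neq0 ?pnatr_eq0 -?lt0n // gt_eqF // (schedule_gt0 e_gt0 hK).
rewrite (condexp_removed_vset (fun r o o' => hXadapt r.+1 o o') X_ge0 fnorm_neq0
  (Ordinal lt_a) v hom) /=.
have [[[x_ge0 [_ x_cover]] [x_supp x_norm]] _] := hXapprox a.+1 om lt_a.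
rewrite (vfrac_supported v x_supp) !mulr_suml; apply: ler_sum => i _.
rewrite -mulrA mulrAC mulrC ler_wpM2l ?hv //.
rewrite mulrA x_norm; apply: removal_prob_ge => //.
- by rewrite ltr0n.
- exact (schedule_ge_sqrt e_gt0 hK (ltnW le_a)).
- by rewrite -x_norm cover_le_fnorm.
Qed.
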